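(* Let $k\ge1$ be an integer. If $\pi$ is a graphical sequence of length $n$ such that every graphical sequence $\pi'\le\pi$ (termwise) of length $n$ is forcibly $\chi(G)\le 2k$, then every graphical sequence $\pi'\le\pi$ of length $n$ is forcibly $a(G)\le k$. That is, $\mathrm{BM}(\chi(G)\le2k)\subseteq\mathrm{BM}(a(G)\le k)$.
   Context: Graphs are finite and simple; a graphical sequence is a nondecreasing integer sequence that is the degree sequence of some graph (a realization). A graphical sequence is forcibly $P$ if every realization has $P$. For a decreasing property $P$ (preserved under deleting edges), $\mathrm{BM}(P)$ is the set of graphical sequences $\pi$ such that every graphical sequence of the same length that is termwise at most $\pi$ is forcibly $P$. $\chi$ is the chromatic number; the vertex arboricity $a(G)$ is the minimum number of parts in a partition of $V(G)$ into sets each inducing a forest. *)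

From mathcomp Require Import all_boot all_order.
Set Implicit Arguments. Unset Strict Implicit. Unset Printing Implicit Defensive.

Definition simple_graph (n : nat) (g : rel 'I_n) : Prop :=
  symmetric g /\ irreflexive g.

Definition deg (n : nat) (g : rel 'I_n) (v : 'I_n) : nat := #|[set u | g v u]|.

Definition deg_seq (n : nat) (g : rel 'I_n) : seq nat :=
  sort leq [seq deg g v | v <- enum 'I_n].

Definition realizes (n : nat) (g : rel 'I_n) (pi : seq nat) : Prop :=
  simple_graph g /\ deg_seq g = pi.

Definition graphical (n : nat) (pi : seq nat) : Prop :=
  size pi = n /\ sorted leq pi /\ exists g : rel 'I_n, realizes g pi.

Definition forcibly (n : nat) (P : rel 'I_n -> Prop) (pi : seq nat) : Prop :=
  forall g : rel 'I_n, realizes g pi -> P g.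

Definition termwise_le (n : nat) (pi' pi : seq nat) : Prop :=
  forall i, i < n -> nth 0 pi' i <= nth 0 pi i.

Definition in_BM (n : nat) (P : rel 'I_n -> Prop) (pi : seq nat) : Prop :=
  graphical n pi /\
  forall pi' : seq nat, graphical n pi' -> termwise_le n pi' pi ->
    forcibly P pi'.

Definition chi_le (n : nat) (m : nat) (g : rel 'I_n) : Prop :=
  exists c : 'I_n -> 'I_m, forall u v, g u v -> c u != c v.

Definition induces_forest (n : nat) (g : rel 'I_n) (A : {set 'I_n}) : Prop :=
  forall s : seq 'I_n, 3 <= size s -> all (fun v => v \in A) s ->
    ~ ucycle g s.

Definition arboricity_le (n : nat) (m : nat) (g : rel 'I_n) : Prop :=
  exists c : 'I_n -> 'I_m,
    forall i : 'I_m, induces_forest g [set v | c v == i].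

(** If every degree sequence below pi is forcibly 2k-colourable, then in any
    graph whose degree sequence lies below pi at most 2k vertices have degree
    at least 2k: otherwise K_{2k+1} plus isolated vertices would have a degree
    sequence below pi.  Ordering those high-degree vertices first, every vertex
    has fewer than 2k earlier neighbours, so a greedy k-colouring can give each
    vertex at most one earlier neighbour of its own colour.  A cycle inside a
    colour class would force its last vertex to have two such neighbours, so
    every colour class induces a forest. *)
From mathcomp Require Import all_boot all_order.
From mathcomp Require Import zify.
Set Implicit Arguments. Unset Strict Implicit. Unset Printing Implicit Defensive.

Lemma exists_small_colour_class (T : finType) k m (N : {set T}) (c : T -> 'I_k) :
  #|N| < k * m.+1 -> exists i, #|[set u in N | c u == i]| <= m.
Proof.
move=> ltNk; apply/existsP; apply: contraT => /existsPn large.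
have cardN : #|N| = \sum_(i < k) #|[set u in N | c u == i]|.
  rewrite -sum1_card (partition_big c xpredT) //; apply: eq_bigr => i _.
  by rewrite -sum1_card; apply: eq_bigl => u; rewrite inE.
have : \sum_(i < k) m.+1 <= #|N|.
  by rewrite cardN; apply: leq_sum => i _; rewrite ltnNge large.
by rewrite sum_nat_const card_ord leqNgt ltNk.
Qed.

Section RankedGraph.

Variables (T : finType) (g : rel T) (rank : T -> nat).

Definition lower_nbrs (v : T) : {set T} := [set u | g v u && (rank u < rank v)].

Lemma greedy_colouring k m : 0 < k ->
  (forall v, #|lower_nbrs v| < k * m.+1) ->
  exists c : T -> 'I_k, forall v, #|[set u in lower_nbrs v | c u == c v]| <= m.
Proof.
move=> k_gt0 few_lower.
suff /(_ [set: T]) [c colS] : forall S : {set T}, exists c : T -> 'I_k,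
    forall v, v \in S -> #|[set u in lower_nbrs v :&: S | c u == c v]| <= m.
  by exists c => v; move: (colS v (in_setT v)); rewrite setIT.
move=> S; have [p] := ubnP #|S|; elim: p S => // p IH S /ltnSE leSp.
have [->|[x0 Sx0]] := set_0Vmem S.
  by exists (fun _ => Ordinal k_gt0) => v; rewrite inE.
pose x := [arg max_(y > x0 in S) rank y].
have [Sx xmax] : x \in S /\ forall y, y \in S -> rank y <= rank x.
  by rewrite /x; case: arg_maxnP.
have [|c colS'] := IH (S :\ x); first by move: leSp; rewrite (cardsD1 x S) Sx.
have [|i small_i] := @exists_small_colour_class _ _ m (lower_nbrs x :&: (S :\ x)) c.
  exact: leq_ltn_trans (subset_leq_card (subsetIl _ _)) (few_lower x).
exists (fun y => if y == x then i else c y) => v Sv.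
have lower_ne_x u w : w \in S -> rank u < rank w -> u != x.
  by move=> Sw ltuw; apply: contraTneq ltuw => ->; rewrite -leqNgt xmax.
case: (eqVneq v x) => [->|nvx].
  apply: leq_trans small_i; apply: subset_leq_card; apply/subsetP => u.
  rewrite !inE => /andP[/andP[/andP[gxu ltux] Su]].
  have nux := lower_ne_x u x Sx ltux.
  by rewrite (negPf nux) => ->; rewrite gxu ltux Su.
apply: leq_trans (colS' v _); last by rewrite !inE nvx.
apply: subset_leq_card; apply/subsetP => u.
rewrite !inE => /andP[/andP[/andP[gvu ltuv] Su]].
have nux := lower_ne_x u v Sv ltuv.
by rewrite (negPf nux) => ->; rewrite gvu ltuv Su.
Qed.

End RankedGraph.

Lemma ucycle_nbrs_card (T : finType) (g : rel T) (s : seq T) v :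
  symmetric g -> ucycle g s -> 3 <= size s -> v \in s ->
  1 < #|[set u | (u \in s) && (u != v) && g v u]|.
Proof.
move=> gsym cyc s_ge3 sv; case: (rot_to sv) => r s' rot_s.
have -> : [set u | (u \in s) && (u != v) && g v u] =
          [set u | (u \in v :: s') && (u != v) && g v u].
  by rewrite -rot_s; apply/setP => u; rewrite !inE mem_rot.
move: cyc s_ge3; rewrite -(rot_ucycle r) -(size_rot r) rot_s {r s sv rot_s}.
case: s' => [|a t] //; case/lastP: t => [|t b] // cyc _.
move: cyc; rewrite /ucycle /cycle /= rcons_path last_rcons => /andP[].
move=> /and3P[gva _ gbv] /and3P[v_notin a_notin _].
have nva : v != a by apply: contraNneq v_notin => ->; rewrite mem_head.
have nvb : v != b.
  by apply: contraNneq v_notin => ->; rewrite inE mem_rcons mem_head orbT.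
have nab : a != b by apply: contraNneq a_notin => ->; rewrite mem_rcons mem_head.
have ab_nbrs :
    [set a; b] \subset [set u | (u \in [:: v, a & rcons t b]) && (u != v) && g v u].
  apply/subsetP => u; rewrite !inE => /orP[] /eqP ->.
    by rewrite eqxx orbT eq_sym nva gva.
  by rewrite mem_rcons mem_head !orbT eq_sym nvb gsym gbv.
by apply: leq_trans (subset_leq_card ab_nbrs); rewrite cards2 nab.
Qed.

Lemma colour_classes_induce_forests n k (g : rel 'I_n) (rank : 'I_n -> nat)
    (c : 'I_n -> 'I_k) :
  symmetric g -> injective rank ->
  (forall v, #|[set u in lower_nbrs g rank v | c u == c v]| <= 1) ->
  forall i, induces_forest g [set v | c v == i].
Proof.
move=> gsym rank_inj one_lower i s s_ge3 s_in cyc.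
have [x0 sx0] : exists x0, x0 \in s.
  by case: s s_ge3 {s_in cyc} => // x0 s _; exists x0; rewrite mem_head.
have [v sv vmax] := @arg_maxnP _ x0 (mem s) rank sx0.
have col_s u : u \in s -> c u = i.
  by move=> su; move/allP: s_in => /(_ u su); rewrite inE => /eqP.
have := ucycle_nbrs_card gsym cyc s_ge3 sv; rewrite ltnNge => /negP; apply.
apply: leq_trans (one_lower v); apply: subset_leq_card; apply/subsetP => u.
rewrite !inE => /andP[/andP[su nuv] gvu].
have le_uv : rank u <= rank v := vmax u su.
rewrite gvu col_s // col_s // eqxx andbT /= ltn_neqAle le_uv andbT.
by apply: contra nuv => /eqP/rank_inj ->.
Qed.

Lemma arboricity_le_of_few_high_degree n k (g : rel 'I_n) :
  0 < k -> symmetric g ->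
  #|[set v | 2 * k <= deg g v]| <= 2 * k -> arboricity_le k g.
Proof.
move=> k_gt0 gsym few_high.
pose high v := 2 * k <= deg g v.
pose rank (v : 'I_n) := if high v then val v else n + val v.
have rank_inj : injective rank.
  move=> u v; rewrite /rank.
  case: (high u); case: (high v) => E; apply: val_inj => //=.
  - by move: (ltn_ord u); rewrite E ltnNge leq_addr.
  - by move: (ltn_ord v); rewrite -E ltnNge leq_addr.
  - by apply/eqP; rewrite -(eqn_add2l n) E.
have few_lower v : #|lower_nbrs g rank v| < k * 2.
  rewrite mulnC; case hv: (high v).
  - have : lower_nbrs g rank v \subset [set u | high u] :\ v.
      apply/subsetP => u; rewrite !inE /rank hv => /andP[_].
      case: (high u) => ltuv.
        by rewrite andbT; apply: contraTneq ltuv => ->; rewrite ltnn.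
      by move: ltuv; rewrite ltnNge (leq_trans (ltnW (ltn_ord v))) // leq_addr.
    move/subset_leq_card/leq_ltn_trans; apply.
    by move: few_high; rewrite (cardsD1 v) inE -/(high v) hv add1n.
  - apply: leq_ltn_trans (_ : #|[set u | g v u]| < 2 * k).
      by apply: subset_leq_card; apply/subsetP => u; rewrite !inE => /andP[].
    by rewrite ltnNge; move: hv; rewrite /high /deg => ->.
have [c one_lower] := greedy_colouring k_gt0 few_lower.
exists c; exact: colour_classes_induce_forests gsym rank_inj one_lower.
Qed.

Lemma count_deg_seq n (g : rel 'I_n) (P : pred nat) :
  count P (deg_seq g) = #|[set v | P (deg g v)]|.
Proof.
rewrite /deg_seq (permP (permEl (perm_sort _ _))) count_map cardsE cardE.
by rewrite /enum_mem size_filter count_filter; apply: eq_count => v; rewrite !inE andbT.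
Qed.

Lemma card_ord_ge n j : j <= n -> #|[set v : 'I_n | j <= v]| = n - j.
Proof.
move=> le_jn; rewrite cardsE cardE /enum_mem size_filter -(count_map val (leq j)).
rewrite -enumT val_enum_ord -{1}(subnKC le_jn) iotaD count_cat add0n.
rewrite (@eq_in_count _ _ pred0) ?count_pred0; last first.
  by move=> x; rewrite mem_iota add0n /= ltnNge => /negbTE.
rewrite (@eq_in_count _ _ predT) ?count_predT ?size_iota //.
by move=> x; rewrite mem_iota => /andP[].
Qed.

Definition clique_above n (j : nat) : rel 'I_n := fun u v => [&& u != v, j <= u & j <= v].
Arguments clique_above : clear implicits.

Lemma clique_above_simple n j : simple_graph (clique_above n j).
Proof.
split=> [u v|u]; last by rewrite /clique_above eqxx.
by rewrite /clique_above eq_sym [(j <= u) && _]andbC.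
Qed.

Lemma deg_clique_above n j (v : 'I_n) :
  deg (clique_above n j) v = if j <= v then n - j.+1 else 0.
Proof.
rewrite /deg; case: ifP => le_jv; last first.
  apply/eqP; rewrite cards_eq0; apply/eqP/setP => u.
  by rewrite !inE /clique_above le_jv andbF.
have -> : [set u | clique_above n j v u] = [set u : 'I_n | j <= u] :\ v.
  by apply/setP => u; rewrite !inE /clique_above le_jv eq_sym.
have le_jn : j <= n := leq_trans le_jv (ltnW (ltn_ord v)).
move: (cardsD1 v [set u : 'I_n | j <= u]).
by rewrite inE le_jv card_ord_ge // add1n subnS => ->.
Qed.

Lemma deg_seq_clique_above n j :
  deg_seq (clique_above n j) = [seq if j <= i then n - j.+1 else 0 | i <- iota 0 n].
Proof.
rewrite /deg_seq (eq_map (@deg_clique_above n j)) (sorted_sort leq_trans).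
  by rewrite -val_enum_ord -map_comp.
have : sorted (relpre val leq) (enum 'I_n).
  by rewrite -sorted_map val_enum_ord iota_sorted.
rewrite sorted_map; apply: sub_sorted => u v /= le_uv.
by case: ifP => // le_ju; rewrite (leq_trans le_ju le_uv).
Qed.

Lemma clique_above_not_colourable n j : j < n -> ~ chi_le (n - j.+1) (clique_above n j).
Proof.
move=> lt_jn [c proper].
have c_inj : {in [set v : 'I_n | j <= v] &, injective c}.
  move=> u v; rewrite !inE => le_ju le_jv cuv; apply/eqP; apply: contraT => nuv.
  by move: (proper u v); rewrite /clique_above nuv le_ju le_jv cuv eqxx => /(_ isT).
have := max_card [set c v | v in [set v : 'I_n | j <= v]].
by rewrite card_in_imset // card_ord_ge ?(ltnW lt_jn) // card_ord; lia.
Qed.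

(* Otherwise K_{m+1} on the last m+1 vertices, with degree sequence
   0,...,0,m,...,m, would be a graphical sequence below pi. *)
Lemma in_BM_chi_nth_lt n m pi :
  in_BM (@chi_le n m) pi -> m < n -> nth 0 pi (n - m.+1) < m.
Proof.
move=> [[pi_size [pi_sorted _]] chi_BM] lt_mn; rewrite ltnNge; apply/negP => le_m_pij.
pose j := n - m.+1.
have m_eq : n - j.+1 = m by rewrite /j; lia.
have K_gr : graphical n (deg_seq (clique_above n j)).
  split; first by rewrite deg_seq_clique_above size_map size_iota.
  split; first exact: (sort_sorted leq_total).
  by exists (clique_above n j); split; [exact: clique_above_simple|].
have K_le : termwise_le n (deg_seq (clique_above n j)) pi.
  move=> i lt_in; rewrite deg_seq_clique_above (nth_map 0) ?size_iota // nth_iota //.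
  case: ifP => // le_ji; rewrite m_eq; apply: leq_trans le_m_pij _.
  by apply: (sorted_leq_nth leq_trans leqnn) => //; rewrite inE pi_size // /j; lia.
apply: (@clique_above_not_colourable n j); first by rewrite /j; lia.
rewrite m_eq; apply: chi_BM K_gr K_le _ _.
by split; [exact: clique_above_simple|].
Qed.

Lemma count_ge_termwise_le n m pi pi' :
  size pi = n -> sorted leq pi -> size pi' = n -> termwise_le n pi' pi ->
  nth 0 pi (n - m.+1) < m -> count (leq m) pi' <= m.
Proof.
move=> pi_size pi_sorted pi'_size le_pi lt_pij.
have [le_nm|lt_mn] := leqP n m; first by rewrite (leq_trans (count_size _ _)) ?pi'_size.
rewrite -(cat_take_drop (n - m) pi') count_cat.
have -> : count (leq m) (take (n - m) pi') = 0.
  apply/eqP; rewrite -leqn0 leqNgt -has_count; apply/(has_nthP 0) => -[i].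
  rewrite size_take_min pi'_size => lt_i; rewrite nth_take; last by lia.
  move=> ge_m; have le_pij : nth 0 pi i <= nth 0 pi (n - m.+1).
    by apply: (sorted_leq_nth leq_trans leqnn); rewrite ?unfold_in /= ?pi_size //; lia.
  have le_pi'i : nth 0 pi' i <= nth 0 pi i by apply: le_pi; lia.
  by move: (leq_trans ge_m (leq_trans le_pi'i le_pij)); rewrite leqNgt lt_pij.
by rewrite add0n (leq_trans (count_size _ _)) // size_drop pi'_size; lia.
Qed.

Theorem mainTheorem12 (k n : nat) (pi : seq nat) :
  1 <= k ->
  in_BM (@chi_le n (2 * k)) pi ->
  in_BM (@arboricity_le n k) pi.
Proof.
move=> k_gt0 [pi_gr chi_BM]; split=> // pi' pi'_gr le_pi g [[g_sym _] deg_g].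
apply: arboricity_le_of_few_high_degree k_gt0 g_sym _.
have [le_n|lt_n] := leqP n (2 * k).
  by apply: leq_trans (max_card _) _; rewrite card_ord.
have [pi_size [pi_sorted _]] := pi_gr.
rewrite -count_deg_seq deg_g.
apply: count_ge_termwise_le pi_size pi_sorted pi'_gr.1 le_pi _.
exact: in_BM_chi_nth_lt.
Qed.
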